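(* Let $\mathcal{H}$ be a hedgehog with support function $h$ and average width $\overline{w}$, let $k>2$ be an integer, and let $\mathcal{P}_k$ be its $k$th Order Preserving Set. For $s\in[0,2\pi]$, the point $\mathcal{P}_k(s)$ is singular (i.e. $\mathcal{P}_k'(s)=0$) if and only if \[ \frac1k\sum_{j=1}^{k}\rho_{\mathcal{H}}\Big(s+\frac{2\pi j}{k}\Big)=\frac12\overline{w}. \] Furthermore, a singular point $\mathcal{P}_k(s)$ is a cusp if and only if $\sum_{j=1}^{k}\rho_{\mathcal{H}}'\big(s+\frac{2\pi j}{k}\big)\neq0$.
   Context: Write $u(s)=(\cos s,\sin s)$, $u'(s)=(-\sin s,\cos s)$. A hedgehog is a closed planar curve determined by a smooth $2\pi$-periodic function $h$ (its support function) via $\mathcal{H}(s)=h(s)u(s)+h'(s)u'(s)$. Its signed radius of curvature at parameter $s$ is $\rho_{\mathcal{H}}(s)=h(s)+h''(s)$, and its average width is $\overline{w}=\frac1\pi\int_0^{2\pi}h(s)\,ds$. For $(x,y)\in\mathbb{R}^2$ let $(x,y)^\perp=(-y,x)$. The $k$th Order Preserving Set of $\mathcal{H}$ is the curve $\mathcal{P}_k(s)=\frac{1}{k}\sum_{j=1}^{k}\Big(\cos\big(\tfrac{2\pi j}{k}\big)\,\mathcal{H}\big(s+\tfrac{2\pi j}{k}\big)-\sin\big(\tfrac{2\pi j}{k}\big)\,\mathcal{H}\big(s+\tfrac{2\pi j}{k}\big)^{\perp}\Big)-\frac{1}{2}\overline{w}\,u(s)$. A singular point $f(s_0)$ of a smooth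 curve $f$ is a cusp if $f$ is locally diffeomorphic (in source and target) near $s_0$ to $t\mapsto(t^2,t^3)$ at $t=0$; equivalently $f'(s_0)=0$ and $\det(f''(s_0),f'''(s_0))\neq0$. *)

From Stdlib Require Import Reals.
From Coquelicot Require Import Coquelicot.
Open Scope R_scope.

Definition u (s : R) : R * R := (cos s, sin s).
Definition u' (s : R) : R * R := (- sin s, cos s).

Definition perp (p : R * R) : R * R := (- snd p, fst p).

Definition vadd (p q : R * R) : R * R := (fst p + fst q, snd p + snd q).
Definition vscale (a : R) (p : R * R) : R * R := (a * fst p, a * snd p).

Definition smooth (h : R -> R) : Prop :=
  forall (n : nat) (x : R), ex_derive (Derive_n h n) x.
Definition periodic_2pi (h : R -> R) : Prop :=
  forall s : R, h (s + 2 * PI) = h s.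

Definition hedgehog (h : R -> R) (s : R) : R * R :=
  vadd (vscale (h s) (u s)) (vscale (Derive h s) (u' s)).

Definition rho (h : R -> R) (s : R) : R := h s + Derive_n h 2 s.

Definition avg_width (h : R -> R) : R := / PI * RInt h 0 (2 * PI).

Fixpoint vsum (f : nat -> R * R) (n : nat) : R * R :=
  match n with
  | O => (0, 0)
  | S m => vadd (vsum f m) (f (S m))
  end.

Fixpoint rsum (f : nat -> R) (n : nat) : R :=
  match n with
  | O => 0
  | S m => rsum f m + f (S m)
  end.

Definition theta (k j : nat) : R := 2 * PI * INR j / INR k.

Definition OPS (k : nat) (h : R -> R) (s : R) : R * R :=
  vadd
    (vscale (/ INR k)
       (vsum (fun j =>
          vadd (vscale (cos (theta k j)) (hedgehog h (s + theta k j)))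
               (vscale (- sin (theta k j)) (perp (hedgehog h (s + theta k j)))))
        k))
    (vscale (- (1/2) * avg_width h) (u s)).

Definition dcurve (n : nat) (f : R -> R * R) (s : R) : R * R :=
  (Derive_n (fun t => fst (f t)) n s, Derive_n (fun t => snd (f t)) n s).

Definition singular_at (f : R -> R * R) (s0 : R) : Prop :=
  dcurve 1 f s0 = (0, 0).

Definition det2 (p q : R * R) : R := fst p * snd q - snd p * fst q.

Definition cusp_at (f : R -> R * R) (s0 : R) : Prop :=
  singular_at f s0 /\ det2 (dcurve 2 f s0) (dcurve 3 f s0) <> 0.

From Stdlib Require Import Reals Lra Lia.
From Coquelicot Require Import Coquelicot.
Open Scope R_scope.

(* A hedgehog moves along u', with speed its radius of curvature: H' = rho u'.
   Rotating by -a maps u'(s + a) to u'(s), so every rotated translate in the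
   sum defining P_k moves along u'(s), and P_k' = g u' with
   g(s) = (1/k) sum_j rho(s + 2 pi j / k) - w/2.  For any curve f with f' = g u',
   differentiating twice more gives f'' = g' u' - g u and
   f''' = (g'' - g) u' - 2 g' u; hence f is singular exactly where g vanishes,
   and there det(f'', f''') = 2 g'^2, which is nonzero iff g' is. *)

Lemma vsum_vscale_l (c : nat -> R) (p : R * R) (n : nat) :
  vsum (fun j => vscale (c j) p) n = vscale (rsum c n) p.
Proof.
  induction n as [|n IH]; simpl.
  - unfold vscale; f_equal; ring.
  - rewrite IH; unfold vadd, vscale; simpl; f_equal; ring.
Qed.

Lemma is_derive_rsum (F : nat -> R -> R) (dF : nat -> R) (x : R) (n : nat) :
  (forall j, is_derive (F j) x (dF j)) ->
  is_derive (fun t => rsum (fun j => F j t) n) x (rsum dF n).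
Proof.
  intros HF; induction n as [|n IH]; simpl.
  - apply (is_derive_const (V := R_NormedModule)).
  - now apply (is_derive_plus (V := R_NormedModule)).
Qed.

Lemma is_derive_shift (f : R -> R) (a x l : R) :
  is_derive f (x + a) l -> is_derive (fun t => f (t + a)) x l.
Proof.
  intros Hf; rewrite <- (scal_one l); apply (is_derive_comp f); [exact Hf |].
  apply (is_derive_ext (fun t => t + a)); [reflexivity |].
  auto_derive; [exact I | reflexivity].
Qed.

Lemma is_derive_rsum_shift (phi : R -> R) (c : nat -> R) (x : R) (n : nat) :
  (forall j, ex_derive phi (x + c j)) ->
  is_derive (fun t => rsum (fun j => phi (t + c j)) n) x
            (rsum (fun j => Derive phi (x + c j)) n).
Proof.
  intros Hphi; apply (is_derive_rsum (fun j t => phi (t + c j))); intros j.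
  apply is_derive_shift, Derive_correct, Hphi.
Qed.

Definition is_derive_curve (f : R -> R * R) (x : R) (v : R * R) : Prop :=
  is_derive (fun t => fst (f t)) x (fst v) /\ is_derive (fun t => snd (f t)) x (snd v).

Lemma is_derive_curve_ext (f g : R -> R * R) (x : R) (v : R * R) :
  (forall t, f t = g t) -> is_derive_curve f x v -> is_derive_curve g x v.
Proof.
  intros E [F1 F2]; split.
  - apply (is_derive_ext (fun t => fst (f t))); [intros t; now rewrite E | exact F1].
  - apply (is_derive_ext (fun t => snd (f t))); [intros t; now rewrite E | exact F2].
Qed.

Lemma is_derive_curve_const (p : R * R) (x : R) : is_derive_curve (fun _ => p) x (0, 0).
Proof. split; apply (is_derive_const (V := R_NormedModule)). Qed.

Lemma is_derive_curve_vadd (f g : R -> R * R) (x : R) (df dg : R * R) :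
  is_derive_curve f x df -> is_derive_curve g x dg ->
  is_derive_curve (fun t => vadd (f t) (g t)) x (vadd df dg).
Proof.
  intros [F1 F2] [G1 G2]; split; now apply (is_derive_plus (V := R_NormedModule)).
Qed.

Lemma is_derive_curve_vscale (a : R -> R) (f : R -> R * R) (x da : R) (df : R * R) :
  is_derive a x da -> is_derive_curve f x df ->
  is_derive_curve (fun t => vscale (a t) (f t)) x (vadd (vscale da (f x)) (vscale (a x) df)).
Proof.
  intros Ha [F1 F2]; split; simpl; apply (is_derive_mult a); auto; apply Rmult_comm.
Qed.

Lemma is_derive_curve_vscale_l (c : R) (f : R -> R * R) (x : R) (df : R * R) :
  is_derive_curve f x df -> is_derive_curve (fun t => vscale c (f t)) x (vscale c df).
Proof. intros [F1 F2]; split; simpl; now apply is_derive_scal. Qed.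

Lemma is_derive_curve_perp (f : R -> R * R) (x : R) (df : R * R) :
  is_derive_curve f x df -> is_derive_curve (fun t => perp (f t)) x (perp df).
Proof. intros [F1 F2]; split; simpl; [now apply (is_derive_opp (V := R_NormedModule)) | exact F1]. Qed.

Lemma is_derive_curve_shift (f : R -> R * R) (a x : R) (v : R * R) :
  is_derive_curve f (x + a) v -> is_derive_curve (fun t => f (t + a)) x v.
Proof.
  intros [F1 F2]; split; apply (is_derive_shift (fun t => _ (f t))); assumption.
Qed.

Lemma is_derive_curve_vsum (F : nat -> R -> R * R) (dF : nat -> R * R) (x : R) (n : nat) :
  (forall j, is_derive_curve (F j) x (dF j)) ->
  is_derive_curve (fun t => vsum (fun j => F j t) n) x (vsum dF n).
Proof.
  intros HF; induction n as [|n IH]; simpl.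
  - apply is_derive_curve_const.
  - now apply is_derive_curve_vadd.
Qed.

Lemma is_derive_curve_u (x : R) : is_derive_curve u x (u' x).
Proof. split; [apply is_derive_cos | apply is_derive_sin]. Qed.

Lemma is_derive_curve_u' (x : R) : is_derive_curve u' x (vscale (-1) (u x)).
Proof. split; simpl; auto_derive; auto; lra. Qed.

(* rotation by the angle [-a]: the [j]-th summand of [OPS k h s] is
   [rot (theta k j) (hedgehog h (s + theta k j))] *)
Definition rot (a : R) (p : R * R) : R * R :=
  vadd (vscale (cos a) p) (vscale (- sin a) (perp p)).

Lemma rot_vscale_u' (a c x : R) : rot a (vscale c (u' (x + a))) = vscale c (u' x).
Proof.
  unfold rot, vadd, vscale, perp, u'; simpl; rewrite sin_plus, cos_plus.
  pose proof (sin2_cos2 a) as SC; unfold Rsqr in SC.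
  f_equal; [transitivity (c * - sin x * (sin a * sin a + cos a * cos a))
           | transitivity (c * cos x * (sin a * sin a + cos a * cos a))];
  solve [ring | rewrite SC; ring].
Qed.

Lemma is_derive_curve_rot (a : R) (f : R -> R * R) (x : R) (v : R * R) :
  is_derive_curve f x v -> is_derive_curve (fun t => rot a (f t)) x (rot a v).
Proof.
  intros Hf; apply is_derive_curve_vadd.
  - now apply is_derive_curve_vscale_l.
  - apply (is_derive_curve_vscale_l _ (fun t => perp (f t))).
    now apply is_derive_curve_perp.
Qed.

Lemma is_derive_curve_hedgehog (h : R -> R) (x : R) :
  ex_derive h x -> ex_derive (Derive h) x ->
  is_derive_curve (hedgehog h) x (vscale (rho h x) (u' x)).
Proof.
  intros Hh Hh'.
  assert (E : vadd (vadd (vscale (Derive h x) (u x)) (vscale (h x) (u' x)))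
                   (vadd (vscale (Derive (Derive h) x) (u' x))
                         (vscale (Derive h x) (vscale (-1) (u x))))
              = vscale (rho h x) (u' x)).
  { unfold rho; change (Derive_n h 2 x) with (Derive (Derive h) x).
    unfold vadd, vscale, u, u'; simpl; f_equal; ring. }
  rewrite <- E; apply is_derive_curve_vadd; apply is_derive_curve_vscale;
    auto using Derive_correct, is_derive_curve_u, is_derive_curve_u'.
Qed.

Lemma dcurve_S (n : nat) (f : R -> R * R) (x : R) (v : R * R) :
  is_derive_curve (dcurve n f) x v -> dcurve (S n) f x = v.
Proof.
  intros [D1 D2]; destruct v as [v1 v2]; unfold dcurve; simpl.
  f_equal; now apply is_derive_unique.
Qed.

Section Curve_tangent_to_u'.

Variables (f : R -> R * R) (g : R -> R).
Hypothesis f_speed : forall x, dcurve 1 f x = vscale (g x) (u' x).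

Lemma singular_at_iff_speed_eq0 (s : R) : singular_at f s <-> g s = 0.
Proof.
  unfold singular_at; rewrite f_speed; unfold vscale, u'; simpl.
  pose proof (sin2_cos2 s) as SC; unfold Rsqr in SC.
  split.
  - intros E; injection E; intros; nra.
  - intros ->; f_equal; ring.
Qed.

Hypothesis g_derivable : forall x, ex_derive g x.

Lemma dcurve_2 (x : R) :
  dcurve 2 f x = vadd (vscale (Derive g x) (u' x)) (vscale (- g x) (u x)).
Proof.
  apply dcurve_S, (is_derive_curve_ext (fun t => vscale (g t) (u' t))).
  { intros t; symmetry; apply f_speed. }
  replace (vadd (vscale (Derive g x) (u' x)) (vscale (- g x) (u x)))
    with (vadd (vscale (Derive g x) (u' x)) (vscale (g x) (vscale (-1) (u x))))
    by (unfold vadd, vscale; simpl; f_equal; ring).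
  apply is_derive_curve_vscale; [apply Derive_correct, g_derivable | apply is_derive_curve_u'].
Qed.

Lemma dcurve_3 (s : R) : ex_derive (Derive g) s ->
  dcurve 3 f s = vadd (vscale (Derive (Derive g) s - g s) (u' s)) (vscale (-2 * Derive g s) (u s)).
Proof.
  intros Hg'; apply dcurve_S, (is_derive_curve_ext
    (fun t => vadd (vscale (Derive g t) (u' t)) (vscale (- g t) (u t)))).
  { intros t; symmetry; apply dcurve_2. }
  replace (vadd (vscale (Derive (Derive g) s - g s) (u' s)) (vscale (-2 * Derive g s) (u s)))
    with (vadd (vadd (vscale (Derive (Derive g) s) (u' s)) (vscale (Derive g s) (vscale (-1) (u s))))
               (vadd (vscale (- Derive g s) (u s)) (vscale (- g s) (u' s))))
    by (unfold vadd, vscale; simpl; f_equal; ring).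
  apply is_derive_curve_vadd.
  - apply is_derive_curve_vscale; [apply Derive_correct, Hg' | apply is_derive_curve_u'].
  - apply (is_derive_curve_vscale (fun t => - g t)); [| apply is_derive_curve_u].
    apply (is_derive_opp (V := R_NormedModule)), Derive_correct, g_derivable.
Qed.

Lemma det2_dcurve_at_speed_eq0 (s : R) : ex_derive (Derive g) s -> g s = 0 ->
  det2 (dcurve 2 f s) (dcurve 3 f s) = 2 * Derive g s ^ 2.
Proof.
  intros Hg' Hs; rewrite dcurve_2, (dcurve_3 s Hg'), Hs.
  pose proof (sin2_cos2 s) as SC; unfold Rsqr in SC.
  unfold det2, vadd, vscale, u, u'; simpl.
  transitivity (2 * Derive g s ^ 2 * (sin s * sin s + cos s * cos s)); [ring | rewrite SC; ring].
Qed.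

Lemma cusp_at_iff_speed_derive_neq0 (s : R) : ex_derive (Derive g) s -> g s = 0 ->
  (cusp_at f s <-> Derive g s <> 0).
Proof.
  intros Hg' Hs; unfold cusp_at.
  rewrite singular_at_iff_speed_eq0, (det2_dcurve_at_speed_eq0 s Hg' Hs).
  split.
  - intros [_ Hdet] E; apply Hdet; rewrite E; ring.
  - intros Hd; split; [exact Hs | intros E; apply Hd; nra].
Qed.

End Curve_tangent_to_u'.

Lemma is_derive_curve_rot_hedgehog (h : R -> R) (a x : R) :
  ex_derive h (x + a) -> ex_derive (Derive h) (x + a) ->
  is_derive_curve (fun t => rot a (hedgehog h (t + a))) x (vscale (rho h (x + a)) (u' x)).
Proof.
  intros Hh Hh'; rewrite <- (rot_vscale_u' a).
  now apply is_derive_curve_rot, is_derive_curve_shift, is_derive_curve_hedgehog.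
Qed.

Definition OPS_speed (k : nat) (h : R -> R) (s : R) : R :=
  / INR k * rsum (fun j => rho h (s + theta k j)) k - 1/2 * avg_width h.

Lemma dcurve_OPS (k : nat) (h : R -> R) (x : R) : smooth h ->
  dcurve 1 (OPS k h) x = vscale (OPS_speed k h x) (u' x).
Proof.
  intros Hs; apply dcurve_S, (is_derive_curve_ext (fun t =>
    vadd (vscale (/ INR k) (vsum (fun j => rot (theta k j) (hedgehog h (t + theta k j))) k))
         (vscale (- (1/2) * avg_width h) (u t)))); [reflexivity |].
  replace (vscale (OPS_speed k h x) (u' x))
    with (vadd (vscale (/ INR k) (vsum (fun j => vscale (rho h (x + theta k j)) (u' x)) k))
               (vscale (- (1/2) * avg_width h) (u' x)))
    by (rewrite vsum_vscale_l; unfold OPS_speed, vadd, vscale; simpl; f_equal; ring).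
  apply is_derive_curve_vadd; apply is_derive_curve_vscale_l; [| apply is_derive_curve_u].
  apply (is_derive_curve_vsum (fun j t => rot (theta k j) (hedgehog h (t + theta k j)))).
  intros j; apply is_derive_curve_rot_hedgehog; [apply (Hs 0%nat) | apply (Hs 1%nat)].
Qed.

Lemma ex_derive_rho (h : R -> R) (x : R) : smooth h -> ex_derive (rho h) x.
Proof. intros Hs; apply (ex_derive_plus h); [apply (Hs 0%nat) | apply (Hs 2%nat)]. Qed.

Lemma ex_derive_Derive_rho (h : R -> R) (x : R) : smooth h -> ex_derive (Derive (rho h)) x.
Proof.
  intros Hs; apply (ex_derive_ext (fun t => Derive h t + Derive_n h 3 t)).
  - intros t; symmetry; apply (Derive_plus h); [apply (Hs 0%nat) | apply (Hs 2%nat)].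
  - apply (ex_derive_plus (Derive h)); [apply (Hs 1%nat) | apply (Hs 3%nat)].
Qed.

Lemma is_derive_OPS_speed (k : nat) (h : R -> R) (x : R) : smooth h ->
  is_derive (OPS_speed k h) x (/ INR k * rsum (fun j => Derive (rho h) (x + theta k j)) k).
Proof.
  intros Hs; unfold OPS_speed.
  rewrite <- (Rminus_0_r (/ INR k * _)).
  apply (is_derive_minus (V := R_NormedModule)); [| apply (is_derive_const (V := R_NormedModule))].
  apply is_derive_scal, is_derive_rsum_shift; intros j; now apply ex_derive_rho.
Qed.

Lemma ex_derive_Derive_OPS_speed (k : nat) (h : R -> R) (x : R) : smooth h ->
  ex_derive (Derive (OPS_speed k h)) x.
Proof.
  intros Hs; apply (ex_derive_ext
    (fun t => / INR k * rsum (fun j => Derive (rho h) (t + theta k j)) k)).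
  - intros t; symmetry; now apply is_derive_unique, is_derive_OPS_speed.
  - eexists; apply is_derive_scal, is_derive_rsum_shift; intros j; now apply ex_derive_Derive_rho.
Qed.

Theorem proposition3p15 (h : R -> R) (k : nat) (s : R) :
  smooth h -> periodic_2pi h -> (2 < k)%nat -> 0 <= s <= 2 * PI ->
  (singular_at (OPS k h) s <->
     / INR k * rsum (fun j => rho h (s + theta k j)) k = (1/2) * avg_width h)
  /\
  (singular_at (OPS k h) s ->
     (cusp_at (OPS k h) s <->
        rsum (fun j => Derive (rho h) (s + theta k j)) k <> 0)).
Proof.
  intros Hs _ Hk _.
  assert (Hspeed := fun x => dcurve_OPS k h x Hs).
  assert (Hderiv : forall x, ex_derive (OPS_speed k h) x)
    by (intros x; eexists; now apply is_derive_OPS_speed).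
  assert (Hk0 : / INR k <> 0) by (apply Rinv_neq_0_compat, not_0_INR; lia).
  rewrite (singular_at_iff_speed_eq0 _ _ Hspeed); unfold OPS_speed at 1; split.
  - split; intros; lra.
  - intros Hsing.
    rewrite (cusp_at_iff_speed_derive_neq0 _ _ Hspeed Hderiv s
               (ex_derive_Derive_OPS_speed k h s Hs) Hsing).
    rewrite (is_derive_unique _ _ _ (is_derive_OPS_speed k h s Hs)).
    split; intros Hne E; apply Hne; [rewrite E; ring |].
    now destruct (Rmult_integral _ _ E).
Qed.
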